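(* Let $G'=(V',E',m')$ and $G=(V,E,m)$ be finite weighted graphs such that $G'$ is a weak cover of $G$. Then $h_G\ge h_{G'}$.
   Context: For a finite graph $G=(V,E)$ with positive edge weights $m$, set $m(v)=\sum_{e\ni v}m(e)$, $m(U)=\sum_{v\in U}m(v)$, $m(U_1,U_2)=\sum_{(u_1,u_2)\in U_1\times U_2,\ \{u_1,u_2\}\in E}m(\{u_1,u_2\})$, and $h_G=\min_{\emptyset\neq U\subsetneq V}\frac{m(U,V\setminus U)\,m(V)}{m(U)\,m(V\setminus U)}$. $G'$ is a weak cover of $G$ if there is a surjective map $p:V'\to V$ such that for every $\{v',u'\}\in E'$, $\{p(v'),p(u')\}\in E$, the induced map $p:E'\to E$ is surjective, and for every $e\in E$, $m(e)=\sum_{e'\in p^{-1}(e)}m'(e')$. *)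

From HB Require Import structures.
From mathcomp Require Import all_boot all_order all_algebra.
Set Implicit Arguments. Unset Strict Implicit. Unset Printing Implicit Defensive.
Import Order.TTheory GRing.Theory Num.Theory.
Local Open Scope ring_scope.

(* A finite weighted (simple) graph on the finite vertex type V:
   an edge set E of 2-element subsets of V, and edge weights m : {set V} -> R
   (only the values on E matter), positive on edges. *)
Definition wgraph (R : realFieldType) (V : finType)
    (E : {set {set V}}) (m : {set V} -> R) : Prop :=
  (forall e, e \in E -> #|e| = 2%N) /\ (forall e, e \in E -> 0 < m e).

Section Weights.
Variables (R : realFieldType) (V : finType) (E : {set {set V}}) (m : {set V} -> R).

Definition vweight (v : V) : R := \sum_(e in E | v \in e) m e.

Definition setweight (U : {set V}) : R := \sum_(v in U) vweight v.

Definition crossweight (U1 U2 : {set V}) : R :=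
  \sum_(u1 in U1) \sum_(u2 in U2 | [set u1; u2] \in E) m [set u1; u2].

Definition cheeger_ratio (U : {set V}) : R :=
  crossweight U (~: U) * setweight setT / (setweight U * setweight (~: U)).

Definition cheeger_ratios : seq R :=
  [seq cheeger_ratio U | U <- enum [pred U : {set V} | (U != set0) && (U != setT)]].

(* h_G = minimum of the ratios over nonempty proper U.  (Meaningful when
   V has at least two vertices, so that the list is nonempty.) *)
Definition cheeger : R :=
  \big[Num.min/head 0 cheeger_ratios]_(x <- cheeger_ratios) x.
End Weights.

Definition weak_cover (R : realFieldType) (V' V : finType)
    (E' : {set {set V'}}) (m' : {set V'} -> R)
    (E : {set {set V}}) (m : {set V} -> R) (p : V' -> V) : Prop :=
  [/\ (forall v, exists v', p v' = v),
      (forall e', e' \in E' -> p @: e' \in E),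
      (forall e, e \in E -> exists2 e', e' \in E' & p @: e' = e)
    & (forall e, e \in E -> m e = \sum_(e' in E' | p @: e' == e) m' e')].

From mathcomp Require Import all_boot all_order all_algebra.
Import Order.TTheory GRing.Theory Num.Theory.
Local Open Scope ring_scope.

(* Pulling a vertex set back along the cover map preserves its Cheeger ratio.
   Both m(U) and m(U, V \ U) are sums over edges of the edge weight times the
   number of endpoints (or of endpoint pairs) the edge has in U and in its
   complement.  Every edge of G' maps bijectively onto an edge of G, so these
   counts agree for an edge e' and its image when U is replaced by its
   preimage, and the weight of each edge of G is the total weight of the edges
   of G' above it.  So the ratio realising h_G is also a ratio of G'. *)

Lemma bigmin_mem d (T : orderType d) (s : seq T) (x0 : T) :
  x0 \in s -> \big[Order.min/x0]_(x <- s) x \in s.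
Proof.
move=> x0s; rewrite big_seq; elim/big_ind: _ => // x y xs ys.
by rewrite minElt; case: ifP.
Qed.

Lemma set2_eq_card2 (T : finType) (e : {set T}) (x y : T) :
  #|e| = 2%N -> x != y -> ([set x; y] == e) = (x \in e) && (y \in e).
Proof.
move=> e2 xy; apply/eqP/andP => [<- | [xe ye]]; first by rewrite !inE !eqxx orbT.
by apply/eqP; rewrite eqEcard subUset !sub1set xe ye cards2 xy e2.
Qed.

Lemma edge_pairs_setX (T : finType) (e U W : {set T}) :
  #|e| = 2%N -> [disjoint U & W] ->
  [set u in setX U W | [set u.1; u.2] == e] = setX (e :&: U) (e :&: W).
Proof.
move=> e2 dUW; apply/setP => -[x y]; rewrite !inE /=.
case xU: (x \in U); case yW: (y \in W); rewrite ?andbF //= !andbT.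
by rewrite set2_eq_card2 //; apply: contraTneq yW => <-; rewrite (disjointFr dUW xU).
Qed.

Section EdgeSums.
Context {R : realFieldType} {V : finType} (E : {set {set V}}) (m : {set V} -> R).

Lemma setweight_edges (U : {set V}) :
  setweight E m U = \sum_(e in E) m e * #|e :&: U|%:R.
Proof.
rewrite /setweight /vweight (exchange_big_dep (mem E)) /=; last first.
  by move=> v e _ /andP[].
apply: eq_bigr => e eE; rewrite (eq_bigl (mem (e :&: U))) => [|v]; last first.
  by rewrite !inE eE andbC.
by rewrite sumr_const mulr_natr.
Qed.

Lemma crossweight_edges (U W : {set V}) :
  (forall e, e \in E -> #|e| = 2%N) -> [disjoint U & W] ->
  crossweight E m U W = \sum_(e in E) m e * (#|e :&: U| * #|e :&: W|)%:R.
Proof.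
move=> E2 dUW; rewrite /crossweight pair_big_dep /=.
rewrite (partition_big (fun u => [set u.1; u.2]) (mem E)) /=; last first.
  by move=> u /and3P[].
apply: eq_bigr => e eE; rewrite (eq_bigr (fun=> m e)) => [|u /andP[_ /eqP->]//].
rewrite sumr_const mulr_natr -cardsX -edge_pairs_setX ?E2 //.
congr (_ *+ _); apply: eq_card => u; rewrite unfold_in !inE.
by case: eqP => [->|]; rewrite ?andbF // eE !andbT.
Qed.

End EdgeSums.

Lemma card_setI_preimset [aT rT : finType] [f : aT -> rT] [D : {set aT}]
    (A : {set rT}) :
  {in D &, injective f} -> #|D :&: f @^-1: A| = #|f @: D :&: A|.
Proof.
move=> injf; have imDA : f @: (D :&: f @^-1: A) = f @: D :&: A.
  apply/setP => y; rewrite inE; apply/imsetP/andP.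
    case=> x /setIP[Dx]; rewrite inE => Afx ->; split=> //; exact: imset_f.
  by case=> /imsetP[x Dx ->] Ay; exists x; rewrite // inE Dx inE.
rewrite -imDA card_in_imset // => x y /setIP[Dx _] /setIP[Dy _]; exact: injf.
Qed.

Lemma preimset_nontrivial [aT rT : finType] [f : aT -> rT] [U : {set rT}] :
  (forall y, exists x, f x = y) -> U != set0 -> U != setT ->
  (f @^-1: U != set0) && (f @^-1: U != setT).
Proof.
move=> surjf; have codomT (B : {set rT}) : B \subset codom f.
  by apply/subsetP => y _; have [x <-] := surjf y; exact: codom_f.
rewrite -!proper0 -!properT -(preimset0 f) -(preimsetT f) => U0 UT.
by rewrite !preimset_proper.
Qed.

Section WeakCover.
Context {R : realFieldType} {V' V : finType}.
Context {E' : {set {set V'}}} {m' : {set V'} -> R}.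
Context {E : {set {set V}}} {m : {set V} -> R} {p : V' -> V}.
Hypothesis cover : weak_cover E' m' E m p.
Hypothesis E'2 : forall e', e' \in E' -> #|e'| = 2%N.
Hypothesis E2 : forall e, e \in E -> #|e| = 2%N.

Lemma weak_cover_sum (F : {set V} -> R) :
  \sum_(e in E) m e * F e = \sum_(e' in E') m' e' * F (p @: e').
Proof.
have [_ E'E _ mE] := cover.
rewrite [RHS](partition_big (fun e' : {set V'} => p @: e') (fun e => e \in E)) //=.
apply: eq_bigr => e eE; rewrite mE // mulr_suml.
by apply: eq_bigr => e' /andP[_ /eqP->].
Qed.

Lemma injective_on_edge e' : e' \in E' -> {in e' &, injective p}.
Proof.
have [_ E'E _ _] := cover.
by move=> e'E'; apply/imset_injP; rewrite E2 ?E'2 ?E'E.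
Qed.

Lemma setweight_preimset (A : {set V}) :
  setweight E' m' (p @^-1: A) = setweight E m A.
Proof.
rewrite !setweight_edges (weak_cover_sum (fun e => #|e :&: A|%:R)).
apply: eq_bigr => e' e'E'.
by rewrite (card_setI_preimset _ (injective_on_edge _ e'E')).
Qed.

Lemma crossweight_preimset (A : {set V}) :
  crossweight E' m' (p @^-1: A) (~: p @^-1: A) = crossweight E m A (~: A).
Proof.
rewrite !crossweight_edges // -?subsets_disjoint //.
rewrite (weak_cover_sum (fun e => (#|e :&: A| * #|e :&: ~: A|)%:R)).
apply: eq_bigr => e' e'E'; have injp := injective_on_edge _ e'E'.
by rewrite -preimsetC !(card_setI_preimset _ injp).
Qed.

Lemma cheeger_ratio_preimset (A : {set V}) :
  cheeger_ratio E' m' (p @^-1: A) = cheeger_ratio E m A.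
Proof.
rewrite /cheeger_ratio crossweight_preimset -preimsetC -(preimsetT p).
by rewrite !setweight_preimset.
Qed.

End WeakCover.

Section CheegerConstant.
Context {R : realFieldType} {V : finType} (E : {set {set V}}) (m : {set V} -> R).

Lemma cheeger_le_ratio (U : {set V}) :
  U != set0 -> U != setT -> cheeger E m <= cheeger_ratio E m U.
Proof.
by move=> U0 UT; apply: ge_bigmin_seq => //; apply: map_f; rewrite mem_enum inE U0.
Qed.

Lemma cheeger_attained : (1 < #|V|)%N ->
  exists2 U, (U != set0) && (U != setT) & cheeger E m = cheeger_ratio E m U.
Proof.
move=> V2; have [x _] : exists x : V, x \in V by apply/card_gt0P; exact: ltnW.
have x_proper : ([set x] != set0) && ([set x] != setT).
  rewrite -card_gt0 cards1 /=; apply: contraTneq V2 => xT.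
  by rewrite -cardsT -xT cards1.
have x_ratio : cheeger_ratio E m [set x] \in cheeger_ratios E m.
  by apply: map_f; rewrite mem_enum inE x_proper.
have /mapP[U] : cheeger E m \in cheeger_ratios E m.
  apply: bigmin_mem.
  by case: (cheeger_ratios E m) x_ratio => // a l _; exact: mem_head.
by rewrite mem_enum; exists U.
Qed.

End CheegerConstant.

Theorem proposition4p7 (R : realFieldType) (V' V : finType)
    (E' : {set {set V'}}) (m' : {set V'} -> R)
    (E : {set {set V}}) (m : {set V} -> R) (p : V' -> V) :
  (1 < #|V|)%N ->
  wgraph E' m' -> wgraph E m ->
  weak_cover E' m' E m p ->
  cheeger E' m' <= cheeger E m.
Proof.
move=> V2 [E'2 _] [E2 _] cover.
have [U /andP[U0 UT] ->] := cheeger_attained E m V2.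
have [surjp _ _ _] := cover.
have /andP[pU0 pUT] := preimset_nontrivial surjp U0 UT.
by rewrite -(cheeger_ratio_preimset cover E'2 E2) cheeger_le_ratio.
Qed.
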